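(* Assume (A2), (A3), that $\phi'>0$ on $\mathbb R_{++}$ (so $\phi^{-1}$ is continuously differentiable with positive derivative), and that $V$ is irreducible. Let $q\in\partial\mathcal F$ and $u(q)=\big((\phi^{-1})'(q_1)/\phi^{-1}(q_1),\dots,(\phi^{-1})'(q_K)/\phi^{-1}(q_K)\big)>0$. Let $n_0\in\mathcal N$ be any index with $\lambda_{n_0}(q)=\max_{n\in\mathcal N}\lambda_n(q)$, where $\lambda_n(q)=\rho(G(q)B^{(n)})$, and let $y,x\in\mathbb R_{++}^K$ be left and right eigenvectors of $G(q)B^{(n_0)}$ associated with $\lambda_{n_0}(q)$. If $w=c\,u(q)\circ y\circ x$ for some $c>0$, then every maximizer $p^*$ of $p\mapsto F(p,w)$ over $\mathcal P_+$ satisfies $\phi(\mathrm{SIR}_k(p^* )/\gamma_k)=q_k$ for all $k\in\mathcal K$.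
   Context: Network model: $K\ge 2$ links, $\mathcal K=\{1,\dots,K\}$. Power constraint set $\mathcal P=\{p\in\mathbb R_+^K: Cp\le\hat p\}$, where $C\in\{0,1\}^{N\times K}$ has at least one entry equal to $1$ in each column and $\hat p=(P_1,\dots,P_N)\in\mathbb R_{++}^N$; $\mathcal P_+=\mathcal P\cap\mathbb R_{++}^K$; $\mathcal N=\{1,\dots,N\}$; $c_n$ is the $n$-th row of $C$ as a column vector. Gain matrix $V\in\mathbb R_+^{K\times K}$ with zero diagonal, noise vector $z\in\mathbb R_{++}^K$, $\mathrm{SIR}_k(p)=p_k/((Vp)_k+z_k)$. SIR targets $\gamma_k>0$, $\Gamma=\mathrm{diag}(\gamma_1,\dots,\gamma_K)$. $B^{(n)}=\Gamma V+\frac1{P_n}\Gamma z c_n^T$. Assumption (A2): $\phi:\mathbb R_{++}\to\mathbb R$ is continuously differentiable and strictly increasing; $\mathcal Q=\phi(\mathbb R_{++})$. Assumption (A3): $\phi^{-1}:\mathcal Q\to\mathbb R_{++}$ is log-convex. $G(q)=\mathrm{diag}(\phi^{-1}(q_1),\dots,\phi^{-1}(q_K))$. Feasible QoS region $\mathcal F=\{q\in\mathcal Q^K:\exists p\in\mathcal P_+,\ q_k=\phi(\mathrm{SIR}_k(p)/\gamma_k)\ \forall k\}$; for $q\in\mathcal F$ the corresponding power vector is unique. $\partial\mathcal F$ is the set of $q\in\mathcal F$ whose corresponding power vector satisfies $Cp\le\hat p$ with equality in at least one component. Aggregate utility: $F(p,w)=\sum_{k\in\mathcal K}w_k\phi(\mathrm{SIR}_k(p)/\gamma_k)$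 for $w\in\mathbb R_{++}^K$; under (A2),(A3) its maximum over $\mathcal P_+$ is attained. $\circ$ denotes the entrywise product; $\rho(\cdot)$ the spectral radius. *)

From Stdlib Require Import Reals.
Open Scope R_scope.

(* Vectors in R^K are functions nat -> R, only indices < K matter;
   matrices are functions nat -> nat -> R.  Indices are 0-based. *)

Fixpoint rsum (n : nat) (f : nat -> R) : R :=
  match n with
  | O => 0
  | S m => rsum m f + f m
  end.

Definition SIR (K : nat) (V : nat -> nat -> R) (z : nat -> R) (p : nat -> R) (k : nat) : R :=
  p k / (rsum K (fun j => V k j * p j) + z k).

Definition in_Pplus (K N : nat) (C : nat -> nat -> R) (Pmax : nat -> R) (p : nat -> R) : Prop :=
  (forall k, (k < K)%nat -> 0 < p k) /\
  (forall n, (n < N)%nat -> rsum K (fun k => C n k * p k) <= Pmax n).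

Definition in_boundaryF (K N : nat) (C : nat -> nat -> R) (Pmax : nat -> R)
    (V : nat -> nat -> R) (z gamma : nat -> R) (phi : R -> R) (q : nat -> R) : Prop :=
  exists p : nat -> R,
    in_Pplus K N C Pmax p /\
    (forall k, (k < K)%nat -> q k = phi (SIR K V z p k / gamma k)) /\
    (exists n, (n < N)%nat /\ rsum K (fun k => C n k * p k) = Pmax n).

Definition Futil (K : nat) (V : nat -> nat -> R) (z gamma : nat -> R) (phi : R -> R)
    (p w : nat -> R) : R :=
  rsum K (fun k => w k * phi (SIR K V z p k / gamma k)).

Definition GB (phiinv : R -> R) (q : nat -> R) (gamma : nat -> R) (V : nat -> nat -> R)
    (z : nat -> R) (C : nat -> nat -> R) (Pmax : nat -> R) (n : nat) : nat -> nat -> R :=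
  fun i j => phiinv (q i) * (gamma i * (V i j + z i * C n j / Pmax n)).

(* (a + i b) is a (complex) eigenvalue of the real K x K matrix M:
   there is a nonzero complex vector vr + i vi with M (vr + i vi) = (a + i b)(vr + i vi). *)
Definition is_eigenvalue (K : nat) (M : nat -> nat -> R) (a b : R) : Prop :=
  exists vr vi : nat -> R,
    (exists j, (j < K)%nat /\ (vr j <> 0 \/ vi j <> 0)) /\
    (forall i, (i < K)%nat ->
       rsum K (fun j => M i j * vr j) = a * vr i - b * vi i /\
       rsum K (fun j => M i j * vi j) = b * vr i + a * vi i).

Definition is_spectral_radius (K : nat) (M : nat -> nat -> R) (r : R) : Prop :=
  (exists a b, is_eigenvalue K M a b /\ sqrt (a * a + b * b) = r) /\
  (forall a b, is_eigenvalue K M a b -> sqrt (a * a + b * b) <= r).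

(* path i = i_0 -> i_1 -> ... -> i_m = j in the digraph of V (edges where V > 0) *)
Fixpoint vpath (K : nat) (V : nat -> nat -> R) (i : nat) (l : list nat) (j : nat) : Prop :=
  match l with
  | nil => i = j
  | cons h t => (h < K)%nat /\ 0 < V i h /\ vpath K V h t j
  end.

(* Irreducible nonnegative matrix: its digraph is strongly connected. *)
Definition irreducible (K : nat) (V : nat -> nat -> R) : Prop :=
  forall i j, (i < K)%nat -> (j < K)%nat -> i <> j -> exists l, l <> nil /\ vpath K V i l j.

From Stdlib Require Import Reals Lra Lia.
Open Scope R_scope.

(** Writing
    [t_k = SIR_k(pstar)/gamma_k] and [g_k = phi^{-1}(q_k)], three bounds squeeze:
    - optimality against [pq] plus log-convexity of [phi^{-1}] (tangent
      inequality) give [sum_k y_k x_k (ln t_k - ln g_k) >= 0];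
    - the power constraint gives, termwise, [ln t_k - ln g_k <= ln pstar_k - ln (M pstar)_k];
    - a logarithmic Collatz-Wielandt inequality (Jensen for [exp] along the rows
      of [M], balanced by [y]) gives
      [sum_k y_k x_k (ln (M pstar)_k - ln pstar_k) >= ln lam sum_k y_k x_k >= 0],
      since [lam >= rho(G(q) B^(ns)) >= 1] ([pq] is a fixed point).
    Hence all are equalities: [lam = 1], constraint [n0] is tight at [pstar], and
    by irreducibility [pstar] is proportional to [x], so [M pstar = pstar] and [t = g]. *)


Lemma rsum_ext n f g :
  (forall k, (k < n)%nat -> f k = g k) -> rsum n f = rsum n g.
Proof.
  induction n as [|n IH]; intros H; simpl; auto.
  rewrite IH, H by (auto; intros; apply H; lia). reflexivity.
Qed.

Lemma rsum_plus n f g : rsum n (fun k => f k + g k) = rsum n f + rsum n g.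
Proof. induction n as [|n IH]; simpl; [lra | rewrite IH; ring]. Qed.

Lemma rsum_minus n f g : rsum n (fun k => f k - g k) = rsum n f - rsum n g.
Proof. induction n as [|n IH]; simpl; [lra | rewrite IH; ring]. Qed.

Lemma rsum_scal n a f : rsum n (fun k => a * f k) = a * rsum n f.
Proof. induction n as [|n IH]; simpl; [ring | rewrite IH; ring]. Qed.

Lemma rsum_const0 n : rsum n (fun _ => 0) = 0.
Proof. induction n as [|n IH]; simpl; [lra | rewrite IH; ring]. Qed.

Lemma rsum_le n f g :
  (forall k, (k < n)%nat -> f k <= g k) -> rsum n f <= rsum n g.
Proof.
  induction n as [|n IH]; intros H; simpl; [lra |].
  assert (rsum n f <= rsum n g) by (apply IH; intros; apply H; lia).
  specialize (H n ltac:(lia)). lra.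
Qed.

Lemma rsum_nonneg n f : (forall k, (k < n)%nat -> 0 <= f k) -> 0 <= rsum n f.
Proof. intros H. rewrite <- (rsum_const0 n). now apply rsum_le. Qed.

Lemma rsum_pos n f :
  (0 < n)%nat -> (forall k, (k < n)%nat -> 0 < f k) -> 0 < rsum n f.
Proof.
  destruct n as [|n]; [lia |]. intros _ H; simpl.
  assert (0 <= rsum n f) by (apply rsum_nonneg; intros; left; apply H; lia).
  specialize (H n ltac:(lia)). lra.
Qed.

Lemma rsum_nonneg_eq0 n f :
  (forall k, (k < n)%nat -> 0 <= f k) -> rsum n f <= 0 ->
  forall k, (k < n)%nat -> f k = 0.
Proof.
  induction n as [|n IH]; simpl; intros H Hs k Hk; [lia |].
  assert (0 <= rsum n f) by (apply rsum_nonneg; intros; apply H; lia).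
  assert (0 <= f n) by (apply H; lia).
  destruct (Nat.eq_dec k n) as [-> | Hkn]; [lra |].
  apply IH; [intros; apply H; lia | lra | lia].
Qed.

Lemma rsum_swap n m f :
  rsum n (fun i => rsum m (fun j => f i j)) = rsum m (fun j => rsum n (fun i => f i j)).
Proof.
  induction n as [|n IH]; simpl; [symmetry; apply rsum_const0 |].
  rewrite IH, <- rsum_plus. reflexivity.
Qed.

Lemma rsum_nonzero n f : rsum n f <> 0 -> exists k, (k < n)%nat /\ f k <> 0.
Proof.
  induction n as [|n IH]; simpl; intros H; [lra |].
  destruct (Req_dec (f n) 0) as [Hn | Hn].
  - destruct IH as [k [Hk Hf]]; [lra |]. exists k; split; [lia | auto].
  - exists n; split; [lia | auto].
Qed.

Definition matvec (K : nat) (M : nat -> nat -> R) (p : nat -> R) (k : nat) : R :=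
  rsum K (fun j => M k j * p j).

Lemma weighted_sum_squeeze n (w a b : nat -> R) (L : R) :
  (0 < n)%nat -> (forall k, (k < n)%nat -> 0 < w k) ->
  (forall k, (k < n)%nat -> a k + b k <= 0) ->
  0 <= rsum n (fun k => w k * a k) ->
  L * rsum n w <= rsum n (fun k => w k * b k) -> 0 <= L ->
  (forall k, (k < n)%nat -> a k + b k = 0) /\ L = 0 /\
  rsum n (fun k => w k * b k) <= L * rsum n w.
Proof.
  intros Hn Hw Hab Ha Hb HL.
  assert (Hwsum : 0 < rsum n w) by now apply rsum_pos.
  assert (Hsum : rsum n (fun k => w k * a k) + rsum n (fun k => w k * b k) = 0).
  { rewrite <- rsum_plus.
    assert (Hle : rsum n (fun k => w k * a k + w k * b k) <= 0).
    { rewrite <- (rsum_const0 n). apply rsum_le. intros k Hk.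
      specialize (Hw k Hk). specialize (Hab k Hk). nra. }
    assert (0 <= L * rsum n w) by nra.
    rewrite rsum_plus in *. lra. }
  assert (HL0 : L = 0) by nra.
  split; [| split; [exact HL0 | subst; lra]].
  intros k Hk.
  assert (Hterm : - (w k * (a k + b k)) = 0).
  { apply (rsum_nonneg_eq0 n (fun k => - (w k * (a k + b k)))); auto.
    - intros j Hj. specialize (Hw j Hj). specialize (Hab j Hj). nra.
    - rewrite (rsum_ext _ _ (fun k => -1 * (w k * a k + w k * b k))) by (intros; ring).
      rewrite rsum_scal, rsum_plus. lra. }
  specialize (Hw k Hk). assert (Hwk : w k * (a k + b k) = 0) by lra.
  apply Rmult_integral in Hwk as [Hwk | Hwk]; lra.
Qed.

Lemma ln_le_compat a b : 0 < a -> a <= b -> ln a <= ln b.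
Proof. intros Ha [Hab | <-]; [left; now apply ln_increasing | lra]. Qed.

Lemma ln_div_pos a b : 0 < a -> 0 < b -> ln (a / b) = ln a - ln b.
Proof.
  intros Ha Hb. unfold Rdiv.
  rewrite ln_mult, ln_Rinv by (auto; now apply Rinv_0_lt_compat). ring.
Qed.

Lemma ln_mult_exp a b m : 0 < a -> 0 < b -> ln (a * b * exp m) = ln a + ln b + m.
Proof.
  intros Ha Hb.
  rewrite ln_mult, ln_mult, ln_exp; auto; [apply Rmult_lt_0_compat | apply exp_pos]; auto.
Qed.

Lemma convex_above_tangent (f : R -> R) (a b L : R) :
  derivable_pt_lim f a L ->
  (forall th, 0 < th <= 1 -> f (a + th * (b - a)) <= f a + th * (f b - f a)) ->
  L * (b - a) <= f b - f a.
Proof.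
  intros Hder Hconv.
  destruct (Req_dec b a) as [-> | Hba]; [lra |].
  apply Rnot_lt_le; intro Hlt.
  set (e := L * (b - a) - (f b - f a)).
  set (d := Rabs (b - a)).
  assert (Hd : 0 < d) by (apply Rabs_pos_lt; lra).
  assert (He : 0 < e) by (unfold e; lra).
  destruct (Hder (e / d)) as [del Hdel]; [now apply Rdiv_lt_0_compat |].
  assert (Hdel0 : 0 < del) by apply (cond_pos del).
  (* a step [D = th (b - a)] short enough for the difference quotient *)
  set (th := Rmin 1 (del / (2 * d))).
  assert (Hth0 : 0 < th) by (apply Rmin_pos; [lra | apply Rdiv_lt_0_compat; lra]).
  assert (Hth1 : th <= 1) by apply Rmin_l.
  assert (Hth2 : th <= del / (2 * d)) by apply Rmin_r.
  set (D := th * (b - a)).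
  assert (HD0 : D <> 0) by (apply Rmult_integral_contrapositive; split; lra).
  assert (HDdel : Rabs D < del).
  { unfold D. rewrite Rabs_mult, (Rabs_right th) by lra. fold d.
    assert (th * d <= del / (2 * d) * d) by (apply Rmult_le_compat_r; lra).
    replace (del / (2 * d) * d) with (del / 2) in * by (field; lra). lra. }
  specialize (Hdel D HD0 HDdel).
  set (Q := (f (a + D) - f a) / D) in Hdel.
  (* convexity bounds the difference quotient by the chord slope *)
  assert (Hchord : Q * (b - a) <= f b - f a).
  { apply Rmult_le_reg_l with th; [exact Hth0 |].
    assert (HQ : Q * D = f (a + D) - f a) by (unfold Q; field; exact HD0).
    replace (th * (Q * (b - a))) with (Q * D) by (unfold D; ring).
    specialize (Hconv th (conj Hth0 Hth1)). fold D in Hconv. lra. }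
  assert (Hclose : Rabs ((Q - L) * (b - a)) < e).
  { rewrite Rabs_mult. fold d.
    assert (Rabs (Q - L) * d < e / d * d) by (apply Rmult_lt_compat_r; auto).
    replace (e / d * d) with e in * by (field; lra). lra. }
  apply Rabs_def2 in Hclose. unfold e in Hclose. lra.
Qed.

Lemma exp_tangent_le a b : exp b * (1 + (a - b)) <= exp a.
Proof.
  replace (exp a) with (exp b * exp (a - b)) by (rewrite <- exp_plus; f_equal; ring).
  apply Rmult_le_compat_l; [left; apply exp_pos | apply exp_ineq1_le].
Qed.

Lemma exp_tangent_eq a b : exp b * (1 + (a - b)) = exp a -> a = b.
Proof.
  intros E. destruct (Req_dec (a - b) 0) as [Hab | Hab]; [lra |].
  replace (exp a) with (exp b * exp (a - b)) in E by (rewrite <- exp_plus; f_equal; ring).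
  pose proof (exp_ineq1 _ Hab). pose proof (exp_pos b).
  apply Rmult_eq_reg_l in E; lra.
Qed.

(** Jensen's inequality for [exp] with nonnegative weights [a_j] and weighted
    mean [m] of the values [v_j]: [(sum a) exp m <= sum a_j exp v_j].  The gap
    is a sum of nonnegative tangent defects. *)
Section ExpJensen.
Variables (n : nat) (a v : nat -> R) (m : R).
Hypothesis Ha : forall j, (j < n)%nat -> 0 <= a j.
Hypothesis Hmean : rsum n (fun j => a j * v j) = m * rsum n a.

Lemma exp_mean_gap :
  rsum n (fun j => a j * exp (v j)) - rsum n a * exp m =
  rsum n (fun j => a j * (exp (v j) - exp m * (1 + (v j - m)))).
Proof.
  rewrite (rsum_ext _ (fun j => a j * (exp (v j) - exp m * (1 + (v j - m))))
     (fun j => a j * exp (v j) +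
     ((- exp m * (1 - m)) * a j + (- exp m) * (a j * v j)))) by (intros; ring).
  rewrite !rsum_plus, !rsum_scal, Hmean. ring.
Qed.

Lemma exp_defect_nonneg j :
  (j < n)%nat -> 0 <= a j * (exp (v j) - exp m * (1 + (v j - m))).
Proof.
  intros Hj. apply Rmult_le_pos; [now apply Ha |].
  pose proof (exp_tangent_le (v j) m). lra.
Qed.

Lemma exp_mean_le : rsum n a * exp m <= rsum n (fun j => a j * exp (v j)).
Proof.
  assert (Hgap : 0 <= rsum n (fun j => a j * (exp (v j) - exp m * (1 + (v j - m))))).
  { apply rsum_nonneg, exp_defect_nonneg. }
  rewrite <- exp_mean_gap in Hgap. lra.
Qed.

Lemma exp_mean_eq :
  rsum n (fun j => a j * exp (v j)) <= rsum n a * exp m ->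
  forall j, (j < n)%nat -> 0 < a j -> v j = m.
Proof.
  intros Hle j Hj Haj.
  assert (Hzero := rsum_nonneg_eq0 n _ exp_defect_nonneg).
  rewrite <- exp_mean_gap in Hzero. specialize (Hzero ltac:(lra) j Hj).
  apply Rmult_integral in Hzero as [Hz | Hz]; [lra |].
  apply exp_tangent_eq. lra.
Qed.
End ExpJensen.

Lemma real_eigenvalue_le_spectral_radius K (M : nat -> nat -> R) (r rho : R) (p : nat -> R) :
  is_spectral_radius K M rho ->
  (exists j, (j < K)%nat /\ p j <> 0) ->
  (forall i, (i < K)%nat -> matvec K M p i = r * p i) ->
  Rabs r <= rho.
Proof.
  intros [_ Hrho] [j [Hj Hpj]] Heig.
  rewrite <- sqrt_Rsqr_abs. replace (Rsqr r) with (r * r + 0 * 0) by (unfold Rsqr; ring).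
  apply Hrho. exists p, (fun _ => 0). split.
  - exists j. auto.
  - intros i Hi. split.
    + unfold matvec in Heig. rewrite (Heig i Hi). ring.
    + rewrite (rsum_ext _ _ (fun _ => 0)) by (intros; ring). rewrite rsum_const0. ring.
Qed.

Lemma log_phiinv_tangent (phi phiinv : R -> R)
  (Hphiinv : forall t, 0 < t -> phiinv (phi t) = t)
  (HA3 : forall s t theta, 0 < s -> 0 < t -> 0 <= theta <= 1 ->
     ln (phiinv (theta * phi s + (1 - theta) * phi t))
       <= theta * ln (phiinv (phi s)) + (1 - theta) * ln (phiinv (phi t)))
  (g s d : R) (Hg : 0 < g) (Hs : 0 < s)
  (Hd : derivable_pt_lim phiinv (phi g) d) :
  d / g * (phi s - phi g) <= ln s - ln g.
Proof.
  assert (Htan := convex_above_tangent (fun r => ln (phiinv r)) (phi g) (phi s) (d / g)).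
  simpl in Htan. rewrite (Hphiinv s Hs), (Hphiinv g Hg) in Htan. apply Htan.
  - replace (d / g) with (/ phiinv (phi g) * d) by (rewrite Hphiinv by exact Hg; field; lra).
    apply (derivable_pt_lim_comp phiinv ln); [exact Hd |].
    apply derivable_pt_lim_ln. rewrite Hphiinv; exact Hg.
  - intros th Hth.
    replace (phi g + th * (phi s - phi g)) with (th * phi s + (1 - th) * phi g) by ring.
    specialize (HA3 s g th Hs Hg ltac:(lra)).
    rewrite (Hphiinv s Hs), (Hphiinv g Hg) in HA3. lra.
Qed.

Lemma utility_gain_log_bound K (phi phiinv : R -> R)
  (Hphiinv : forall t, 0 < t -> phiinv (phi t) = t)
  (HA3 : forall s t theta, 0 < s -> 0 < t -> 0 <= theta <= 1 ->
     ln (phiinv (theta * phi s + (1 - theta) * phi t))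
       <= theta * ln (phiinv (phi s)) + (1 - theta) * ln (phiinv (phi t)))
  (q dinv y x w t0 t : nat -> R) (c : R) (Hc : 0 < c)
  (Ht0 : forall k, (k < K)%nat -> 0 < t0 k)
  (Hq : forall k, (k < K)%nat -> q k = phi (t0 k))
  (Hdinv : forall k, (k < K)%nat -> derivable_pt_lim phiinv (q k) (dinv k))
  (Hy : forall k, (k < K)%nat -> 0 < y k) (Hx : forall k, (k < K)%nat -> 0 < x k)
  (Hw : forall k, (k < K)%nat -> w k = c * ((dinv k / phiinv (q k)) * y k * x k))
  (Ht : forall k, (k < K)%nat -> 0 < t k)
  (Hgain : rsum K (fun k => w k * phi (t0 k)) <= rsum K (fun k => w k * phi (t k))) :
  0 <= rsum K (fun k => y k * x k * (ln (t k) - ln (phiinv (q k)))).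
Proof.
  assert (Hbound : rsum K (fun k => w k * (phi (t k) - q k)) <=
     c * rsum K (fun k => y k * x k * (ln (t k) - ln (phiinv (q k))))).
  { rewrite <- rsum_scal. apply rsum_le. intros k Hk.
    assert (Hg : 0 < phiinv (q k)) by (rewrite Hq, Hphiinv; auto).
    assert (Hphig : phi (phiinv (q k)) = q k) by (rewrite Hq, Hphiinv; auto).
    assert (Htan := log_phiinv_tangent phi phiinv Hphiinv HA3 _ (t k) (dinv k) Hg (Ht k Hk)).
    rewrite Hphig in Htan. specialize (Htan (Hdinv k Hk)).
    assert (Hcyx : 0 < c * y k * x k) by (pose proof (Hy k Hk); pose proof (Hx k Hk);
      apply Rmult_lt_0_compat; [apply Rmult_lt_0_compat |]; lra).
    rewrite Hw by exact Hk.
    replace (c * (dinv k / phiinv (q k) * y k * x k) * (phi (t k) - q k))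
      with (c * y k * x k * (dinv k / phiinv (q k) * (phi (t k) - q k))) by ring.
    replace (c * (y k * x k * (ln (t k) - ln (phiinv (q k)))))
      with (c * y k * x k * (ln (t k) - ln (phiinv (q k)))) by ring.
    apply Rmult_le_compat_l; lra. }
  rewrite (rsum_ext _ _ (fun k => w k * phi (t k) - w k * phi (t0 k))) in Hbound
    by (intros k Hk; rewrite (Hq k Hk); ring).
  rewrite rsum_minus in Hbound.
  apply Rmult_le_reg_l with c; [exact Hc |]. lra.
Qed.

(** For a
    positive vector [p], write [p_j = x_j exp(v_j)] and let [m_k] be the mean of
    [v] along row [k] of [M] weighted by [M_kj x_j].  Jensen's inequality gives
    [ln (M p)_k >= ln lam + ln x_k + m_k] and the left eigenvector balances the
    means against [v], hence
      [ln lam * sum_k y_k x_k <= sum_k y_k x_k (ln (M p)_k - ln p_k)],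
    with equality only if [v] is constant along the support of each row. *)
Section LogCollatzWielandt.
Variables (K : nat) (M : nat -> nat -> R) (lam : R) (x y : nat -> R).
Hypothesis HM : forall i j, (i < K)%nat -> (j < K)%nat -> 0 <= M i j.
Hypothesis Hx : forall k, (k < K)%nat -> 0 < x k.
Hypothesis Hy : forall k, (k < K)%nat -> 0 < y k.
Hypothesis Hlam : 0 < lam.
Hypothesis Hright : forall i, (i < K)%nat -> matvec K M x i = lam * x i.
Hypothesis Hleft : forall j, (j < K)%nat -> rsum K (fun i => y i * M i j) = lam * y j.

Definition logratio (p : nat -> R) (j : nat) : R := ln (p j) - ln (x j).

(** [m_k]: the mean of [v] along row [k] with weights [M_kj x_j], which sum
    to [lam x_k]. *)
Definition rowmean (p : nat -> R) (k : nat) : R :=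
  rsum K (fun j => M k j * x j * logratio p j) / (lam * x k).

Lemma rowmean_spec p k : (k < K)%nat ->
  rsum K (fun j => M k j * x j * logratio p j) = rowmean p k * matvec K M x k.
Proof.
  intros Hk. rewrite Hright by exact Hk. unfold rowmean.
  field. pose proof (Hx k Hk). lra.
Qed.

Lemma rowmean_balance p :
  rsum K (fun k => y k * x k * (rowmean p k - logratio p k)) = 0.
Proof.
  rewrite (rsum_ext _ _ (fun k => / lam * rsum K (fun j => y k * (M k j * x j * logratio p j))
                                 - y k * x k * logratio p k)).
  2: { intros k Hk. unfold rowmean. rewrite rsum_scal. field.
       pose proof (Hx k Hk). split; lra. }
  rewrite rsum_minus, rsum_scal, rsum_swap.
  rewrite (rsum_ext _ (fun j => rsum K (fun i => y i * (M i j * x j * logratio p j)))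
                      (fun j => lam * (y j * x j * logratio p j))).
  - rewrite rsum_scal. field. lra.
  - intros j Hj.
    rewrite (rsum_ext _ _ (fun i => x j * logratio p j * (y i * M i j))) by (intros; ring).
    rewrite rsum_scal, Hleft by exact Hj. ring.
Qed.

Section PositiveVector.
Variable p : nat -> R.
Hypothesis Hp : forall j, (j < K)%nat -> 0 < p j.

Lemma exp_logratio j : (j < K)%nat -> exp (logratio p j) * x j = p j.
Proof.
  intros Hj. unfold logratio, Rminus. rewrite exp_plus, exp_Ropp, !exp_ln by auto.
  field. pose proof (Hx j Hj). lra.
Qed.

Lemma weighted_exp_logratio k j : (j < K)%nat ->
  M k j * x j * exp (logratio p j) = M k j * p j.
Proof. intros Hj. rewrite <- (exp_logratio j Hj). ring. Qed.

Lemma row_jensen k : (k < K)%nat ->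
  lam * x k * exp (rowmean p k) <= matvec K M p k.
Proof.
  intros Hk.
  assert (Hsum : matvec K M p k = rsum K (fun j => M k j * x j * exp (logratio p j)))
    by (apply rsum_ext; intros j Hj; symmetry; now apply weighted_exp_logratio).
  rewrite Hsum, <- (Hright k Hk).
  apply (exp_mean_le K (fun j => M k j * x j)).
  - intros j Hj. apply Rmult_le_pos; [now apply HM | left; now apply Hx].
  - now apply rowmean_spec.
Qed.

Lemma matvec_pos k : (k < K)%nat -> 0 < matvec K M p k.
Proof.
  intros Hk. eapply Rlt_le_trans; [| now apply row_jensen].
  pose proof (Hx k Hk). pose proof (exp_pos (rowmean p k)).
  apply Rmult_lt_0_compat; [apply Rmult_lt_0_compat |]; lra.
Qed.

Lemma row_log_bound k : (k < K)%nat ->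
  ln lam + (rowmean p k - logratio p k) <= ln (matvec K M p k) - ln (p k).
Proof.
  intros Hk. pose proof (Hx k Hk) as Hxk.
  assert (Hpos : 0 < lam * x k * exp (rowmean p k)) by
    (pose proof (exp_pos (rowmean p k)); apply Rmult_lt_0_compat; [apply Rmult_lt_0_compat |]; lra).
  assert (Hln := ln_le_compat _ _ Hpos (row_jensen k Hk)).
  rewrite ln_mult_exp in Hln by auto.
  unfold logratio. lra.
Qed.

Lemma log_collatz_wielandt :
  ln lam * rsum K (fun k => y k * x k) <=
  rsum K (fun k => y k * x k * (ln (matvec K M p k) - ln (p k))).
Proof.
  replace (ln lam * rsum K (fun k => y k * x k)) with
    (rsum K (fun k => y k * x k * (ln lam + (rowmean p k - logratio p k)))).
  - apply rsum_le. intros k Hk. apply Rmult_le_compat_l.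
    + pose proof (Hx k Hk). pose proof (Hy k Hk). nra.
    + now apply row_log_bound.
  - rewrite (rsum_ext _ _ (fun k => ln lam * (y k * x k) + y k * x k * (rowmean p k - logratio p k)))
      by (intros; ring).
    rewrite rsum_plus, rowmean_balance, rsum_scal. ring.
Qed.

Lemma log_collatz_wielandt_eq :
  rsum K (fun k => y k * x k * (ln (matvec K M p k) - ln (p k))) <=
  ln lam * rsum K (fun k => y k * x k) ->
  forall k j, (k < K)%nat -> (j < K)%nat -> 0 < M k j -> logratio p j = rowmean p k.
Proof.
  intros Heq k j Hk Hj HMkj.
  set (gap := fun k => ln (matvec K M p k) - ln (p k) - (ln lam + (rowmean p k - logratio p k))).
  assert (Hgap : forall k, (k < K)%nat -> 0 <= y k * x k * gap k).
  { intros i Hi. pose proof (Hx i Hi). pose proof (Hy i Hi). pose proof (row_log_bound i Hi).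
    unfold gap. apply Rmult_le_pos; nra. }
  assert (Hgap0 : y k * x k * gap k = 0).
  { apply (rsum_nonneg_eq0 K _ Hgap); [| exact Hk].
    rewrite (rsum_ext _ _ (fun k => y k * x k * (ln (matvec K M p k) - ln (p k))
       - (ln lam * (y k * x k) + y k * x k * (rowmean p k - logratio p k)))) by (intros; unfold gap; ring).
    rewrite rsum_minus, rsum_plus, rowmean_balance, rsum_scal. lra. }
  assert (Hrow : ln (matvec K M p k) = ln (lam * x k * exp (rowmean p k))).
  { pose proof (Hx k Hk). pose proof (Hy k Hk).
    rewrite ln_mult_exp by auto.
    apply Rmult_integral in Hgap0 as [Hyx0 | Hgapk]; [nra | unfold gap, logratio in Hgapk; lra]. }
  apply ln_inv in Hrow; [| now apply matvec_pos |].
  2: { pose proof (Hx k Hk). pose proof (exp_pos (rowmean p k)).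
       apply Rmult_lt_0_compat; [apply Rmult_lt_0_compat |]; lra. }
  apply (exp_mean_eq K (fun j => M k j * x j) (logratio p) (rowmean p k)); auto.
  - intros i Hi. apply Rmult_le_pos; [now apply HM | left; now apply Hx].
  - now apply rowmean_spec.
  - rewrite (rsum_ext K _ (fun j => M k j * p j)) by apply weighted_exp_logratio.
    change (matvec K M p k <= matvec K M x k * exp (rowmean p k)).
    rewrite Hright by exact Hk. lra.
  - pose proof (Hx j Hj). nra.
Qed.

(** If moreover some column of [M] is positive and no column vanishes, then
    [p] is proportional to [x], hence an eigenvector for [lam]. *)
Lemma log_collatz_wielandt_eigenvector j0 :
  (j0 < K)%nat -> (forall k, (k < K)%nat -> 0 < M k j0) ->
  (forall j, (j < K)%nat -> exists i, (i < K)%nat /\ 0 < M i j) ->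
  rsum K (fun k => y k * x k * (ln (matvec K M p k) - ln (p k))) <=
  ln lam * rsum K (fun k => y k * x k) ->
  forall k, (k < K)%nat -> matvec K M p k = lam * p k.
Proof.
  intros Hj0 Hcol Hsupp Heq.
  assert (Hconst : forall j, (j < K)%nat -> p j = exp (logratio p j0) * x j).
  { intros j Hj. destruct (Hsupp j Hj) as [i [Hi HMij]].
    rewrite (log_collatz_wielandt_eq Heq i j0 Hi Hj0 (Hcol i Hi)).
    rewrite <- (log_collatz_wielandt_eq Heq i j Hi Hj HMij).
    symmetry. now apply exp_logratio. }
  intros k Hk. unfold matvec.
  rewrite (rsum_ext _ _ (fun j => exp (logratio p j0) * (M k j * x j)))
    by (intros j Hj; rewrite Hconst by exact Hj; ring).
  rewrite rsum_scal. fold (matvec K M x k). rewrite Hright, Hconst by exact Hk. ring.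
Qed.
End PositiveVector.
End LogCollatzWielandt.

Lemma vpath_last_edge K (V : nat -> nat -> R) l :
  forall i j, l <> nil -> (i < K)%nat -> vpath K V i l j ->
  exists i', (i' < K)%nat /\ 0 < V i' j.
Proof.
  induction l as [|h t IH]; intros i j Hl Hi Hpath; [congruence |].
  destruct Hpath as [Hh [HV Hpath]].
  destruct t as [|h' t].
  - simpl in Hpath. subst. now exists i.
  - apply (IH h j); auto. discriminate.
Qed.

Lemma irreducible_in_edge K (V : nat -> nat -> R) :
  (2 <= K)%nat -> irreducible K V ->
  forall j, (j < K)%nat -> exists i, (i < K)%nat /\ 0 < V i j.
Proof.
  intros HK Hirr j Hj.
  set (i := if Nat.eq_dec j 0 then 1%nat else 0%nat).
  assert (Hi : (i < K)%nat) by (unfold i; destruct (Nat.eq_dec j 0); lia).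
  assert (Hij : i <> j) by (unfold i; destruct (Nat.eq_dec j 0); lia).
  destruct (Hirr i j Hi Hj Hij) as [l [Hl Hpath]].
  exact (vpath_last_edge K V l i j Hl Hi Hpath).
Qed.

Section Network.
Variables (K N : nat) (C : nat -> nat -> R) (Pmax : nat -> R).
Variables (V : nat -> nat -> R) (z gamma : nat -> R).
Hypothesis HC01 : forall n k, (n < N)%nat -> (k < K)%nat -> C n k = 0 \/ C n k = 1.
Hypothesis HP : forall n, (n < N)%nat -> 0 < Pmax n.
Hypothesis HVnn : forall i j, (i < K)%nat -> (j < K)%nat -> 0 <= V i j.
Hypothesis Hz : forall k, (k < K)%nat -> 0 < z k.
Hypothesis Hgamma : forall k, (k < K)%nat -> 0 < gamma k.

Lemma load_nonneg p n : (n < N)%nat -> (forall j, (j < K)%nat -> 0 < p j) ->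
  0 <= matvec K C p n.
Proof.
  intros Hn Hp. apply rsum_nonneg. intros j Hj.
  destruct (HC01 n j Hn Hj) as [-> | ->]; [lra | rewrite Rmult_1_l; left; auto].
Qed.

Lemma interference_nonneg p k : (forall j, (j < K)%nat -> 0 < p j) ->
  (k < K)%nat -> 0 <= matvec K V p k.
Proof.
  intros Hp Hk. apply rsum_nonneg. intros j Hj.
  apply Rmult_le_pos; [now apply HVnn | left; auto].
Qed.

Lemma SIR_pos p k : (forall j, (j < K)%nat -> 0 < p j) -> (k < K)%nat ->
  0 < SIR K V z p k / gamma k.
Proof.
  intros Hp Hk. pose proof (interference_nonneg p k Hp Hk). pose proof (Hz k Hk).
  unfold SIR. fold (matvec K V p k).
  apply Rdiv_lt_0_compat; [apply Rdiv_lt_0_compat |]; auto; lra.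
Qed.

Variables (phiinv : R -> R) (q : nat -> R).
Hypothesis Hg : forall k, (k < K)%nat -> 0 < phiinv (q k).

Lemma GB_matvec n p k :
  matvec K (GB phiinv q gamma V z C Pmax n) p k =
  phiinv (q k) * (gamma k * (matvec K V p k + z k * matvec K C p n / Pmax n)).
Proof.
  unfold matvec.
  rewrite (rsum_ext _ _ (fun j => (phiinv (q k) * gamma k) * (V k j * p j)
            + (phiinv (q k) * gamma k * z k / Pmax n) * (C n j * p j)))
    by (intros; unfold GB, Rdiv; ring).
  rewrite rsum_plus, !rsum_scal. unfold Rdiv. ring.
Qed.

Lemma GB_nonneg n i j : (n < N)%nat -> (i < K)%nat -> (j < K)%nat ->
  0 <= GB phiinv q gamma V z C Pmax n i j.
Proof.
  intros Hn Hi Hj. unfold GB.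
  pose proof (Hg i Hi). pose proof (Hgamma i Hi). pose proof (HVnn i j Hi Hj).
  pose proof (Hz i Hi). pose proof (Rinv_0_lt_compat _ (HP n Hn)).
  destruct (HC01 n j Hn Hj) as [-> | ->]; unfold Rdiv;
    apply Rmult_le_pos; try lra; apply Rmult_le_pos; nra.
Qed.

Lemma GB_pos n i j : (n < N)%nat -> (i < K)%nat -> (j < K)%nat ->
  0 < V i j \/ C n j = 1 -> 0 < GB phiinv q gamma V z C Pmax n i j.
Proof.
  intros Hn Hi Hj Hsupp. unfold GB.
  pose proof (Hg i Hi). pose proof (Hgamma i Hi). pose proof (HVnn i j Hi Hj).
  pose proof (Hz i Hi). pose proof (Rinv_0_lt_compat _ (HP n Hn)).
  assert (Hload : 0 <= z i * C n j / Pmax n).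
  { unfold Rdiv. destruct (HC01 n j Hn Hj) as [-> | ->]; nra. }
  apply Rmult_lt_0_compat; [lra |]. apply Rmult_lt_0_compat; [lra |].
  destruct Hsupp as [HV | ->]; [lra |]. unfold Rdiv. nra.
Qed.

Lemma effective_interference_pos n p k : (k < K)%nat ->
  0 < matvec K (GB phiinv q gamma V z C Pmax n) p k ->
  0 < matvec K V p k + z k * matvec K C p n / Pmax n.
Proof.
  intros Hk HMp. rewrite GB_matvec in HMp.
  pose proof (Hg k Hk). pose proof (Hgamma k Hk).
  apply (Rmult_lt_reg_l (phiinv (q k) * gamma k)); nra.
Qed.

Lemma sir_log_gap n p k : (n < N)%nat -> in_Pplus K N C Pmax p -> (k < K)%nat ->
  0 < matvec K (GB phiinv q gamma V z C Pmax n) p k ->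
  ln (SIR K V z p k / gamma k) - ln (phiinv (q k)) +
  (ln (matvec K (GB phiinv q gamma V z C Pmax n) p k) - ln (p k)) =
  ln (matvec K V p k + z k * matvec K C p n / Pmax n) - ln (matvec K V p k + z k).
Proof.
  intros Hn [Hp _] Hk HMp.
  pose proof (effective_interference_pos n p k Hk HMp) as Hpos.
  pose proof (Hp k Hk). pose proof (Hg k Hk). pose proof (Hgamma k Hk).
  pose proof (interference_nonneg p k Hp Hk). pose proof (Hz k Hk).
  rewrite GB_matvec. unfold SIR. fold (matvec K V p k).
  rewrite !ln_div_pos by (try apply Rdiv_lt_0_compat; lra).
  rewrite !ln_mult by nra. ring.
Qed.

Lemma sir_log_gap_le n p k : (n < N)%nat -> in_Pplus K N C Pmax p -> (k < K)%nat ->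
  0 < matvec K (GB phiinv q gamma V z C Pmax n) p k ->
  ln (SIR K V z p k / gamma k) - ln (phiinv (q k)) +
  (ln (matvec K (GB phiinv q gamma V z C Pmax n) p k) - ln (p k)) <= 0.
Proof.
  intros Hn Hpp Hk HMp. rewrite sir_log_gap by auto.
  pose proof (effective_interference_pos n p k Hk HMp) as Hpos.
  destruct Hpp as [Hp Hcap].
  assert (Hcapn : matvec K C p n <= Pmax n) by exact (Hcap n Hn).
  pose proof (load_nonneg p n Hn Hp). pose proof (HP n Hn). pose proof (Hz k Hk).
  assert (Hle : z k * matvec K C p n / Pmax n <= z k).
  { apply (Rmult_le_reg_r (Pmax n)); [lra |].
    unfold Rdiv. rewrite Rmult_assoc, Rinv_l, Rmult_1_r by lra. nra. }
  pose proof (ln_le_compat _ _ Hpos (Rplus_le_compat_l (matvec K V p k) _ _ Hle)). lra.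
Qed.

Lemma sir_log_gap_eq n p k : (n < N)%nat -> in_Pplus K N C Pmax p -> (k < K)%nat ->
  0 < matvec K (GB phiinv q gamma V z C Pmax n) p k ->
  ln (SIR K V z p k / gamma k) - ln (phiinv (q k)) +
  (ln (matvec K (GB phiinv q gamma V z C Pmax n) p k) - ln (p k)) = 0 ->
  matvec K C p n = Pmax n.
Proof.
  intros Hn Hpp Hk HMp Heq. rewrite sir_log_gap in Heq by auto.
  pose proof (effective_interference_pos n p k Hk HMp) as Hpos.
  destruct Hpp as [Hp _].
  pose proof (interference_nonneg p k Hp Hk). pose proof (Hz k Hk). pose proof (HP n Hn).
  assert (Hsame : matvec K V p k + z k * matvec K C p n / Pmax n = matvec K V p k + z k)
    by (apply ln_inv; lra).
  assert (Hload : z k * (matvec K C p n / Pmax n - 1) = 0) by (unfold Rdiv in *; lra).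
  apply Rmult_integral in Hload as [Hz0 | Hratio]; [lra |].
  apply (Rmult_eq_reg_r (/ Pmax n)); [| apply Rinv_neq_0_compat; lra].
  rewrite Rinv_r by lra. unfold Rdiv in Hratio. lra.
Qed.

Lemma boundary_fixed_point pq ns : (ns < N)%nat ->
  (forall k, (k < K)%nat -> 0 < pq k) ->
  matvec K C pq ns = Pmax ns ->
  (forall k, (k < K)%nat -> phiinv (q k) = SIR K V z pq k / gamma k) ->
  forall k, (k < K)%nat -> matvec K (GB phiinv q gamma V z C Pmax ns) pq k = pq k.
Proof.
  intros Hns Hpq Htight Hq k Hk. rewrite GB_matvec, Htight, Hq by exact Hk.
  pose proof (interference_nonneg pq k Hpq Hk). pose proof (Hz k Hk).
  pose proof (HP ns Hns). pose proof (Hgamma k Hk).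
  unfold SIR. fold (matvec K V pq k). field. lra.
Qed.

Lemma boundary_spectral_radius_ge_1 pq ns rho : (0 < K)%nat -> (ns < N)%nat ->
  (forall k, (k < K)%nat -> 0 < pq k) ->
  matvec K C pq ns = Pmax ns ->
  (forall k, (k < K)%nat -> phiinv (q k) = SIR K V z pq k / gamma k) ->
  is_spectral_radius K (GB phiinv q gamma V z C Pmax ns) rho -> 1 <= rho.
Proof.
  intros HK Hns Hpq Htight Hq Hrho.
  rewrite <- Rabs_R1. apply (real_eigenvalue_le_spectral_radius K _ 1 rho pq Hrho).
  - exists 0%nat. split; [exact HK |]. pose proof (Hpq 0%nat HK). lra.
  - intros i Hi. rewrite Rmult_1_l. now apply boundary_fixed_point.
Qed.

Lemma tight_constraint_active_link n p : (n < N)%nat ->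
  matvec K C p n = Pmax n -> exists j0, (j0 < K)%nat /\ C n j0 = 1.
Proof.
  intros Hn Htight. pose proof (HP n Hn).
  destruct (rsum_nonzero K (fun j => C n j * p j)) as [j0 [Hj0 HCj0]];
    [unfold matvec in Htight; lra |].
  exists j0. split; [exact Hj0 |].
  destruct (HC01 n j0 Hn Hj0) as [HC0 | HC1]; [rewrite HC0 in HCj0; lra | exact HC1].
Qed.

Lemma equality_case_eigenvector n p k1 lam x y :
  (2 <= K)%nat -> irreducible K V -> (n < N)%nat ->
  (forall k, (k < K)%nat -> 0 < x k) -> (forall k, (k < K)%nat -> 0 < y k) -> 0 < lam ->
  (forall i, (i < K)%nat -> matvec K (GB phiinv q gamma V z C Pmax n) x i = lam * x i) ->
  (forall j, (j < K)%nat ->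
     rsum K (fun i => y i * GB phiinv q gamma V z C Pmax n i j) = lam * y j) ->
  in_Pplus K N C Pmax p -> (k1 < K)%nat ->
  ln (SIR K V z p k1 / gamma k1) - ln (phiinv (q k1)) +
  (ln (matvec K (GB phiinv q gamma V z C Pmax n) p k1) - ln (p k1)) = 0 ->
  rsum K (fun k => y k * x k *
    (ln (matvec K (GB phiinv q gamma V z C Pmax n) p k) - ln (p k))) <=
  ln lam * rsum K (fun k => y k * x k) ->
  forall k, (k < K)%nat -> matvec K (GB phiinv q gamma V z C Pmax n) p k = lam * p k.
Proof.
  intros HK Hirr Hn Hx Hy Hlam Hright Hleft Hpp Hk1 Hgap Hcw.
  assert (HM : forall i j, (i < K)%nat -> (j < K)%nat -> 0 <= GB phiinv q gamma V z C Pmax n i j)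
    by (intros; now apply GB_nonneg).
  pose proof Hpp as [Hp _].
  assert (Htight : matvec K C p n = Pmax n).
  { apply (sir_log_gap_eq n p k1); auto.
    apply (matvec_pos K _ lam x); auto. }
  destruct (tight_constraint_active_link n p Hn Htight) as [j0 [Hj0 HCj0]].
  apply (log_collatz_wielandt_eigenvector K _ lam x y HM Hx Hy Hlam Hright Hleft p Hp j0 Hj0);
    auto.
  - intros k Hk. apply GB_pos; auto.
  - intros j Hj. destruct (irreducible_in_edge K V HK Hirr j Hj) as [i [Hi HVij]].
    exists i. split; [exact Hi |]. apply GB_pos; auto.
Qed.
End Network.

Theorem theorem3
  (K N : nat) (HK : (2 <= K)%nat) (HN : (1 <= N)%nat)
  (C : nat -> nat -> R)
  (HC01 : forall n k, (n < N)%nat -> (k < K)%nat -> C n k = 0 \/ C n k = 1)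
  (HCcol : forall k, (k < K)%nat -> exists n, (n < N)%nat /\ C n k = 1)
  (Pmax : nat -> R) (HP : forall n, (n < N)%nat -> 0 < Pmax n)
  (V : nat -> nat -> R)
  (HVnn : forall i j, (i < K)%nat -> (j < K)%nat -> 0 <= V i j)
  (HVdiag : forall k, (k < K)%nat -> V k k = 0)
  (HVirr : irreducible K V)
  (z : nat -> R) (Hz : forall k, (k < K)%nat -> 0 < z k)
  (gamma : nat -> R) (Hgamma : forall k, (k < K)%nat -> 0 < gamma k)
  (* (A2): phi continuously differentiable and strictly increasing on R_{++}, with phi' > 0 *)
  (phi dphi : R -> R)
  (Hphi_der : forall t, 0 < t -> derivable_pt_lim phi t (dphi t))
  (Hdphi_cont : forall t, 0 < t -> continuity_pt dphi t)
  (Hdphi_pos : forall t, 0 < t -> 0 < dphi t)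
  (Hphi_incr : forall s t, 0 < s -> s < t -> phi s < phi t)
  (* phi^{-1} : Q -> R_{++}, Q = phi(R_{++}) *)
  (phiinv : R -> R)
  (Hphiinv : forall t, 0 < t -> phiinv (phi t) = t)
  (* (A3): phi^{-1} log-convex on Q *)
  (HA3 : forall s t theta, 0 < s -> 0 < t -> 0 <= theta <= 1 ->
     ln (phiinv (theta * phi s + (1 - theta) * phi t))
       <= theta * ln (phiinv (phi s)) + (1 - theta) * ln (phiinv (phi t)))
  (q : nat -> R) (Hq : in_boundaryF K N C Pmax V z gamma phi q)
  (* dinv k = (phi^{-1})'(q_k) *)
  (dinv : nat -> R)
  (Hdinv : forall k, (k < K)%nat -> derivable_pt_lim phiinv (q k) (dinv k))
  (* lam n = lambda_n(q) = rho(G(q) B^(n)) *)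
  (lam : nat -> R)
  (Hlam : forall n, (n < N)%nat -> is_spectral_radius K (GB phiinv q gamma V z C Pmax n) (lam n))
  (n0 : nat) (Hn0 : (n0 < N)%nat)
  (Hn0max : forall n, (n < N)%nat -> lam n <= lam n0)
  (y x : nat -> R)
  (Hy : forall k, (k < K)%nat -> 0 < y k)
  (Hx : forall k, (k < K)%nat -> 0 < x k)
  (Hyeig : forall j, (j < K)%nat ->
     rsum K (fun i => y i * GB phiinv q gamma V z C Pmax n0 i j) = lam n0 * y j)
  (Hxeig : forall i, (i < K)%nat ->
     rsum K (fun j => GB phiinv q gamma V z C Pmax n0 i j * x j) = lam n0 * x i)
  (c : R) (Hc : 0 < c)
  (w : nat -> R)
  (Hw : forall k, (k < K)%nat -> w k = c * ((dinv k / phiinv (q k)) * y k * x k))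
  (pstar : nat -> R)
  (Hpstar : in_Pplus K N C Pmax pstar)
  (Hmax : forall p, in_Pplus K N C Pmax p -> Futil K V z gamma phi p w <= Futil K V z gamma phi pstar w) :
  forall k, (k < K)%nat -> phi (SIR K V z pstar k / gamma k) = q k.
Proof.
  intros k0 Hk0.
  destruct Hq as [pq [Hpq [Hqpq [ns [Hns Htight]]]]].
  pose proof Hpq as [Hpos_q _]. pose proof Hpstar as [Hpos_star _].
  set (M := GB phiinv q gamma V z C Pmax n0).
  assert (Hg : forall k, (k < K)%nat -> phiinv (q k) = SIR K V z pq k / gamma k)
    by (intros k Hk; rewrite Hqpq by exact Hk; apply Hphiinv, SIR_pos; auto).
  assert (Hgpos : forall k, (k < K)%nat -> 0 < phiinv (q k))
    by (intros k Hk; rewrite Hg by exact Hk; apply SIR_pos; auto).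
  assert (Hlam1 : 1 <= lam n0).
  { apply Rle_trans with (lam ns); [| now apply Hn0max].
    apply (boundary_spectral_radius_ge_1 K N C Pmax V z gamma HP HVnn Hz Hgamma phiinv q pq ns);
      auto; lia. }
  (* optimality, the SIR gap and the Collatz-Wielandt bound squeeze each other *)
  destruct (weighted_sum_squeeze K (fun k => y k * x k)
     (fun k => ln (SIR K V z pstar k / gamma k) - ln (phiinv (q k)))
     (fun k => ln (matvec K M pstar k) - ln (pstar k)) (ln (lam n0)))
    as [Hterm [Hln1 Hcw]].
  - lia.
  - intros k Hk. pose proof (Hy k Hk). pose proof (Hx k Hk). nra.
  - intros k Hk. apply (sir_log_gap_le K N C Pmax V z gamma); auto.
    apply (matvec_pos K M (lam n0) x); auto; [| lra].
    intros; now apply (GB_nonneg K N C Pmax V z gamma).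
  - apply (utility_gain_log_bound K phi phiinv Hphiinv HA3 q dinv y x w
             (fun k => SIR K V z pq k / gamma k) _ c);
      auto; [intros; apply SIR_pos; auto .. | exact (Hmax pq Hpq)].
  - apply (log_collatz_wielandt K M (lam n0) x y); auto; [| lra].
    intros; now apply (GB_nonneg K N C Pmax V z gamma).
  - rewrite <- ln_1. apply ln_le_compat; lra.
  - (* equality: [lam = 1] and [pstar] is a fixed point of [M], so [t = g] *)
    assert (Hlam_one : lam n0 = 1)
      by (rewrite <- (exp_ln (lam n0)), Hln1, exp_0 by lra; reflexivity).
    assert (Hfix : matvec K M pstar k0 = pstar k0).
    { rewrite <- (Rmult_1_l (pstar k0)), <- Hlam_one.
      apply (equality_case_eigenvector K N C Pmax V z gamma HC01 HP HVnn Hz Hgamma phiinv q Hgpos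
               n0 pstar 0%nat (lam n0) x y); auto; [lra | lia | apply Hterm; lia]. }
    specialize (Hterm k0 Hk0). simpl in Hterm. rewrite Hfix in Hterm.
    assert (Hsir : SIR K V z pstar k0 / gamma k0 = phiinv (q k0))
      by (apply ln_inv; [apply SIR_pos | |]; auto; lra).
    rewrite Hsir, Hg by exact Hk0. symmetry. now apply Hqpq.
Qed.
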